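(* Let $\mathcal{T}$ be a triangulated category, $s\colon S\to T$ a morphism and $X\xleftarrow{x}T\xrightarrow{y}Y$ a span in $\mathcal{T}$. Let $X+_SY$ be a homotopy pushout of $X\xleftarrow{xs}S\xrightarrow{ys}Y$ and $X+_TY$ a homotopy pushout of $X\xleftarrow{x}T\xrightarrow{y}Y$. Then there exists a morphism $X+_SY\to X+_TY$ whose cone is isomorphic to $\Sigma\operatorname{cone}(s)$.
   Context: A commutative square with $g\colon T\to V$, $f\colon T\to U$, $f'\colon V\to P$, $g'\colon U\to P$ is homotopy cartesian if there is an exact triangle $T\xrightarrow{\binom{f}{-g}}U\oplus V\xrightarrow{(g'\ f')}P\to\Sigma T$. Then $P$ (with the maps $g',f'$) is called a homotopy pushout of the span $U\xleftarrow{f}T\xrightarrow{g}V$; it exists and is unique up to non-canonical isomorphism. $\operatorname{cone}(s)$ denotes the third object of an exact triangle on $s$. *)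

(* An honest axiomatization of triangulated categories: a preadditive
   category with zero object and chosen biproducts, an additive
   auto-equivalence Sigma, and a class of distinguished (exact) triangles
   satisfying TR1--TR4 (Verdier's axioms, octahedral axiom as in Stacks 05QK). *)

Set Implicit Arguments.
Unset Strict Implicit.

Record TriangulatedCategory := {
  Obj : Type;
  Hom : Obj -> Obj -> Type;
  comp : forall A B C : Obj, Hom B C -> Hom A B -> Hom A C;
  idm : forall A : Obj, Hom A A;
  comp_assoc : forall A B C D (h : Hom C D) (g : Hom B C) (f : Hom A B),
      comp h (comp g f) = comp (comp h g) f;
  comp_id_l : forall A B (f : Hom A B), comp (idm B) f = f;
  comp_id_r : forall A B (f : Hom A B), comp f (idm A) = f;

  zerom : forall A B : Obj, Hom A B;
  addm : forall A B : Obj, Hom A B -> Hom A B -> Hom A B;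
  negm : forall A B : Obj, Hom A B -> Hom A B;
  addm_assoc : forall A B (f g h : Hom A B), addm f (addm g h) = addm (addm f g) h;
  addm_comm : forall A B (f g : Hom A B), addm f g = addm g f;
  addm_0 : forall A B (f : Hom A B), addm f (zerom A B) = f;
  addm_neg : forall A B (f : Hom A B), addm f (negm f) = zerom A B;
  comp_addl : forall A B C (g1 g2 : Hom B C) (f : Hom A B),
      comp (addm g1 g2) f = addm (comp g1 f) (comp g2 f);
  comp_addr : forall A B C (g : Hom B C) (f1 f2 : Hom A B),
      comp g (addm f1 f2) = addm (comp g f1) (comp g f2);

  zobj : Obj;
  zobj_id : idm zobj = zerom zobj zobj;

  biprod : Obj -> Obj -> Obj;
  bin1 : forall U V, Hom U (biprod U V);
  bin2 : forall U V, Hom V (biprod U V);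
  bpr1 : forall U V, Hom (biprod U V) U;
  bpr2 : forall U V, Hom (biprod U V) V;
  bp11 : forall U V, comp (bpr1 U V) (bin1 U V) = idm U;
  bp22 : forall U V, comp (bpr2 U V) (bin2 U V) = idm V;
  bp12 : forall U V, comp (bpr1 U V) (bin2 U V) = zerom V U;
  bp21 : forall U V, comp (bpr2 U V) (bin1 U V) = zerom U V;
  bp_sum : forall U V, addm (comp (bin1 U V) (bpr1 U V)) (comp (bin2 U V) (bpr2 U V))
                        = idm (biprod U V);

  susp : Obj -> Obj;
  suspm : forall A B, Hom A B -> Hom (susp A) (susp B);
  suspm_comp : forall A B C (g : Hom B C) (f : Hom A B),
      suspm (comp g f) = comp (suspm g) (suspm f);
  suspm_id : forall A, suspm (idm A) = idm (susp A);
  suspm_add : forall A B (f g : Hom A B), suspm (addm f g) = addm (suspm f) (suspm g);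
  susp_faithful : forall A B (f g : Hom A B), suspm f = suspm g -> f = g;
  susp_full : forall A B (h : Hom (susp A) (susp B)), exists f : Hom A B, suspm f = h;
  susp_esssurj : forall B, exists A (u : Hom (susp A) B) (v : Hom B (susp A)),
      comp u v = idm B /\ comp v u = idm (susp A);

  dist : forall X Y Z, Hom X Y -> Hom Y Z -> Hom Z (susp X) -> Prop;

  dist_iso : forall X Y Z X' Y' Z' (f : Hom X Y) (g : Hom Y Z) (h : Hom Z (susp X))
      (f' : Hom X' Y') (g' : Hom Y' Z') (h' : Hom Z' (susp X'))
      (a : Hom X X') (a' : Hom X' X) (b : Hom Y Y') (b' : Hom Y' Y)
      (c : Hom Z Z') (c' : Hom Z' Z),
      comp a' a = idm X -> comp a a' = idm X' ->
      comp b' b = idm Y -> comp b b' = idm Y' ->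
      comp c' c = idm Z -> comp c c' = idm Z' ->
      comp b f = comp f' a -> comp c g = comp g' b ->
      comp (suspm a) h = comp h' c ->
      dist f g h -> dist f' g' h';
  dist_id : forall X, dist (idm X) (zerom X zobj) (zerom zobj (susp X));
  dist_ex : forall X Y (f : Hom X Y), exists Z (g : Hom Y Z) (h : Hom Z (susp X)), dist f g h;
  dist_rot : forall X Y Z (f : Hom X Y) (g : Hom Y Z) (h : Hom Z (susp X)),
      dist f g h <-> dist g h (negm (suspm f));
  dist_morph : forall X Y Z X' Y' Z' (f : Hom X Y) (g : Hom Y Z) (h : Hom Z (susp X))
      (f' : Hom X' Y') (g' : Hom Y' Z') (h' : Hom Z' (susp X'))
      (a : Hom X X') (b : Hom Y Y'),
      dist f g h -> dist f' g' h' -> comp b f = comp f' a ->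
      exists c : Hom Z Z', comp c g = comp g' b /\ comp (suspm a) h = comp h' c;
  dist_oct : forall X Y Z Q1 Q2 Q3 (f : Hom X Y) (g : Hom Y Z)
      (p1 : Hom Y Q1) (d1 : Hom Q1 (susp X))
      (p2 : Hom Z Q2) (d2 : Hom Q2 (susp X))
      (p3 : Hom Z Q3) (d3 : Hom Q3 (susp Y)),
      dist f p1 d1 -> dist (comp g f) p2 d2 -> dist g p3 d3 ->
      exists (a : Hom Q1 Q2) (b : Hom Q2 Q3),
        dist a b (comp (suspm p1) d3) /\
        comp a p1 = comp p2 g /\ comp d2 a = d1 /\
        comp b p2 = p3 /\ comp d3 b = comp (suspm f) d2
}.

Arguments Hom : clear implicits.
Arguments comp {t A B C} _ _.
Arguments idm {t} A.
Arguments zerom {t} A B.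
Arguments addm {t A B} _ _.
Arguments negm {t A B} _.
Arguments biprod {t} _ _.
Arguments bin1 {t} U V.
Arguments bin2 {t} U V.
Arguments bpr1 {t} U V.
Arguments bpr2 {t} U V.
Arguments susp {t} _.
Arguments suspm {t A B} _.
Arguments dist {t X Y Z} _ _ _.

Definition is_iso_obj (C : TriangulatedCategory) (A B : Obj C) : Prop :=
  exists (u : Hom C A B) (v : Hom C B A), comp v u = idm A /\ comp u v = idm B.

Definition is_hpushout (C : TriangulatedCategory) (T U V P : Obj C)
    (f : Hom C T U) (g : Hom C T V) (g' : Hom C U P) (f' : Hom C V P) : Prop :=
  comp g' f = comp f' g /\
  exists h : Hom C P (susp T),
    dist (addm (comp (bin1 U V) f) (comp (bin2 U V) (negm g)))
         (addm (comp g' (bpr1 U V)) (comp f' (bpr2 U V)))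
         h.

(* Write the two homotopy pushouts as cones: PT = cone(G) and PS = cone(G s), where
   G = (x, -y)^t : T -> X (+) Y.  The octahedral axiom applied to S -s-> T -G-> X (+) Y
   gives an exact triangle cone(s) -> PS -m-> PT -> Sigma cone(s); rotating it shows
   that Sigma cone(s) is a cone of m.  Cones are unique up to isomorphism, so this
   holds for every choice of cone(s) and of cone(m). *)

From Stdlib Require Import Setoid.

Section Triangulated.
Context {C : TriangulatedCategory}.

Lemma addm_0l {A B : Obj C} (f : Hom C A B) : addm (zerom A B) f = f.
Proof. rewrite addm_comm. apply addm_0. Qed.

Lemma addm_negl {A B : Obj C} (f : Hom C A B) : addm (negm f) f = zerom A B.
Proof. rewrite addm_comm. apply addm_neg. Qed.

Lemma addm_idem_eq0 {A B : Obj C} (a : Hom C A B) : addm a a = a -> a = zerom A B.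
Proof.
  intro Haa. rewrite <- (addm_neg a).
  rewrite <- (addm_0 a) at 1. rewrite <- (addm_neg a), addm_assoc, Haa. reflexivity.
Qed.

Lemma negm_unique {A B : Obj C} (a b : Hom C A B) : addm a b = zerom A B -> b = negm a.
Proof.
  intro Hab. rewrite <- (addm_0l b), <- (addm_negl a), <- addm_assoc, Hab, addm_0.
  reflexivity.
Qed.

Lemma negm_0 (A B : Obj C) : negm (zerom A B) = zerom A B.
Proof. symmetry. apply negm_unique, addm_0. Qed.

Lemma comp_0r {A B D : Obj C} (g : Hom C B D) : comp g (zerom A B) = zerom A D.
Proof. apply addm_idem_eq0. rewrite <- comp_addr, addm_0. reflexivity. Qed.

Lemma comp_0l {A B D : Obj C} (f : Hom C A B) : comp (zerom B D) f = zerom A D.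
Proof. apply addm_idem_eq0. rewrite <- comp_addl, addm_0. reflexivity. Qed.

Lemma comp_negr {A B D : Obj C} (g : Hom C B D) (f : Hom C A B) :
  comp g (negm f) = negm (comp g f).
Proof. apply negm_unique. rewrite <- comp_addr, addm_neg, comp_0r. reflexivity. Qed.

Lemma comp_negl {A B D : Obj C} (g : Hom C B D) (f : Hom C A B) :
  comp (negm g) f = negm (comp g f).
Proof. apply negm_unique. rewrite <- comp_addl, addm_neg, comp_0l. reflexivity. Qed.

Lemma suspm_0 (A B : Obj C) : suspm (zerom A B) = zerom (susp A) (susp B).
Proof. apply addm_idem_eq0. rewrite <- suspm_add, addm_0. reflexivity. Qed.

Definition is_iso {A B : Obj C} (f : Hom C A B) : Prop :=
  exists g : Hom C B A, comp g f = idm A /\ comp f g = idm B.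

Lemma is_iso_of_comps {A B : Obj C} (c : Hom C A B) (c' : Hom C B A) :
  is_iso (comp c' c) -> is_iso (comp c c') -> is_iso c.
Proof.
  intros [e [He1 He2]] [e' [He1' He2']].
  assert (Hinv : comp e c' = comp c' e').
  { assert (H : comp (comp e (comp c' c)) (comp c' e')
                = comp (comp e c') (comp (comp c c') e'))
      by (rewrite !comp_assoc; reflexivity).
    rewrite He1, comp_id_l, He2', comp_id_r in H. symmetry. exact H. }
  exists (comp c' e'). split.
  - rewrite <- Hinv, <- comp_assoc. exact He1.
  - rewrite comp_assoc. exact He2'.
Qed.

Lemma is_iso_obj_trans (A B D : Obj C) :
  is_iso_obj A B -> is_iso_obj B D -> is_iso_obj A D.
Proof.
  intros [u [v [H1 H2]]] [u' [v' [H1' H2']]].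
  exists (comp u' u), (comp v v'). split.
  - rewrite <- comp_assoc, (comp_assoc v' u' u), H1', comp_id_l. exact H1.
  - rewrite <- comp_assoc, (comp_assoc u v v'), H2, comp_id_l. exact H2'.
Qed.

Lemma is_iso_obj_susp (A B : Obj C) : is_iso_obj A B -> is_iso_obj (susp A) (susp B).
Proof.
  intros [u [v [H1 H2]]]. exists (suspm u), (suspm v).
  rewrite <- !suspm_comp, H1, H2, !suspm_id. split; reflexivity.
Qed.

Lemma dist_zero_id (W : Obj C) :
  dist (zerom (zobj C) W) (idm W) (zerom W (susp (zobj C))).
Proof.
  apply dist_rot.
  apply (dist_iso (f := idm W) (g := zerom W (zobj C)) (h := zerom (zobj C) (susp W))
           (a := idm W) (a' := idm W) (b := idm W) (b' := idm W)
           (c := zerom (zobj C) (susp (zobj C))) (c' := zerom (susp (zobj C)) (zobj C))).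
  all: try apply comp_id_l.
  - rewrite comp_0r. symmetry. apply zobj_id.
  - rewrite comp_0r, <- suspm_0, <- zobj_id, suspm_id. reflexivity.
  - reflexivity.
  - rewrite comp_0r, comp_id_r. reflexivity.
  - rewrite !comp_0r. reflexivity.
  - apply dist_id.
Qed.

Lemma dist_factor {X Y Z W : Obj C} {f : Hom C X Y} {g : Hom C Y Z} {h : Hom C Z (susp X)}
  (phi : Hom C Y W) :
  dist f g h -> comp phi f = zerom X W -> exists psi : Hom C Z W, comp psi g = phi.
Proof.
  intros D Hphi.
  destruct (dist_morph (a := zerom X (zobj C)) (b := phi) D (dist_zero_id W))
    as [c [Hc _]].
  - rewrite Hphi, comp_0r. reflexivity.
  - exists c. rewrite Hc. apply comp_id_l.
Qed.

Lemma dist_endo_fixing_is_iso {X Y Z : Obj C}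
  {f : Hom C X Y} {g : Hom C Y Z} {h : Hom C Z (susp X)} (E : Hom C Z Z) :
  dist f g h -> comp E g = g -> comp h E = h -> is_iso E.
Proof.
  intros D Hg Hh.
  set (phi := addm E (negm (idm Z))).
  assert (HE : E = addm phi (idm Z)).
  { unfold phi. rewrite <- addm_assoc, addm_negl, addm_0. reflexivity. }
  assert (Hphi_g : comp phi g = zerom Y Z).
  { unfold phi. rewrite comp_addl, comp_negl, comp_id_l, Hg, addm_neg. reflexivity. }
  assert (Hh_phi : comp h phi = zerom Z (susp X)).
  { unfold phi. rewrite comp_addr, comp_negr, comp_id_r, Hh, addm_neg. reflexivity. }
  (* phi kills g, so it factors through h, which phi kills: E = 1 + phi is unipotent. *)
  apply dist_rot in D.
  destruct (dist_factor phi D Hphi_g) as [psi Hpsi].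
  assert (Hphi2 : comp phi phi = zerom Z Z).
  { rewrite <- Hpsi at 1. rewrite <- comp_assoc, Hh_phi, comp_0r. reflexivity. }
  exists (addm (idm Z) (negm phi)). rewrite HE. split.
  - rewrite comp_addl, !comp_addr, !comp_negl, Hphi2, negm_0, !comp_id_l, comp_id_r,
      addm_0l, (addm_comm phi (idm Z)), <- addm_assoc, addm_neg, addm_0.
    reflexivity.
  - rewrite comp_addl, !comp_addr, !comp_negr, Hphi2, negm_0, !comp_id_l, comp_id_r,
      addm_0, (addm_comm (idm Z) (negm phi)), addm_assoc, addm_neg, addm_0l.
    reflexivity.
Qed.

Lemma dist_cone_unique {X Y Z Z' : Obj C}
  {f : Hom C X Y} {g : Hom C Y Z} {h : Hom C Z (susp X)}
  {g' : Hom C Y Z'} {h' : Hom C Z' (susp X)} :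
  dist f g h -> dist f g' h' -> is_iso_obj Z Z'.
Proof.
  intros D D'.
  destruct (dist_morph (a := idm X) (b := idm Y) D D') as [c [Hcg Hch]].
  { rewrite comp_id_l, comp_id_r. reflexivity. }
  destruct (dist_morph (a := idm X) (b := idm Y) D' D) as [c' [Hcg' Hch']].
  { rewrite comp_id_l, comp_id_r. reflexivity. }
  rewrite suspm_id, comp_id_l, comp_id_r in *.
  destruct (is_iso_of_comps c c') as [c_inv Hc_inv].
  - apply (dist_endo_fixing_is_iso (comp c' c) D).
    + rewrite <- comp_assoc, Hcg, Hcg'. reflexivity.
    + rewrite comp_assoc, <- Hch', Hch. reflexivity.
  - apply (dist_endo_fixing_is_iso (comp c c') D').
    + rewrite <- comp_assoc, Hcg', Hcg. reflexivity.
    + rewrite comp_assoc, <- Hch, Hch'. reflexivity.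
  - exists c, c_inv. exact Hc_inv.
Qed.

Lemma cone_map_of_comp {X Y Z Q2 Q3 : Obj C} (f : Hom C X Y) (g : Hom C Y Z)
  {p2 : Hom C Z Q2} {d2 : Hom C Q2 (susp X)} {p3 : Hom C Z Q3} {d3 : Hom C Q3 (susp Y)} :
  dist (comp g f) p2 d2 -> dist g p3 d3 ->
  exists b : Hom C Q2 Q3,
    forall (Q1 : Obj C) (p1 : Hom C Y Q1) (d1 : Hom C Q1 (susp X)),
      dist f p1 d1 ->
    forall (Q : Obj C) (b' : Hom C Q3 Q) (b'' : Hom C Q (susp Q2)),
      dist b b' b'' ->
      is_iso_obj Q (susp Q1).
Proof.
  intros Dgf Dg.
  destruct (dist_ex f) as [Q1 [p1 [d1 Df]]].
  destruct (dist_oct Df Dgf Dg) as [a [b [Dab _]]].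
  exists b. intros Q1' p1' d1' Df' Q b' b'' Db.
  apply dist_rot in Dab.
  apply is_iso_obj_trans with (susp Q1).
  - exact (dist_cone_unique Db Dab).
  - apply is_iso_obj_susp. exact (dist_cone_unique Df Df').
Qed.

Definition span_map {T U V : Obj C} (f : Hom C T U) (g : Hom C T V) :
  Hom C T (biprod U V) :=
  addm (comp (bin1 U V) f) (comp (bin2 U V) (negm g)).

Lemma span_map_comp {S T U V : Obj C} (f : Hom C T U) (g : Hom C T V) (s : Hom C S T) :
  span_map (comp f s) (comp g s) = comp (span_map f g) s.
Proof. unfold span_map. rewrite comp_addl, <- !comp_assoc, comp_negl. reflexivity. Qed.

End Triangulated.

Theorem lemma2p6 (C : TriangulatedCategory) (S T X Y : Obj C)
  (s : Hom C S T) (x : Hom C T X) (y : Hom C T Y)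
  (PS : Obj C) (iS : Hom C X PS) (jS : Hom C Y PS)
  (PT : Obj C) (iT : Hom C X PT) (jT : Hom C Y PT) :
  is_hpushout (comp x s) (comp y s) iS jS ->
  is_hpushout x y iT jT ->
  exists m : Hom C PS PT,
    forall (Cs : Obj C) (u : Hom C T Cs) (w : Hom C Cs (susp S)),
      dist s u w ->
    forall (Cm : Obj C) (u' : Hom C PT Cm) (w' : Hom C Cm (susp PS)),
      dist m u' w' ->
      is_iso_obj Cm (susp Cs).
Proof.
  intros [_ [hS DS]] [_ [hT DT]].
  fold (span_map (comp x s) (comp y s)) in DS.
  fold (span_map x y) in DT.
  rewrite span_map_comp in DS.
  exact (cone_map_of_comp s (span_map x y) DS DT).
Qed.
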